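(* Fix $\beta\in(1,2)$, let $Y$ be the stationary random walk described in the context and $\mathcal C=\mathbb N^+$. Then for every $t\ge0$, $$\mathbf P[Y_0\in\mathcal C,\,Y_t\in\mathcal C]-\mathbf P[Y_0\in\mathcal C]^2\le\tfrac12\,\mathbf P\big[Y_s\in\mathcal C\ \forall s\in\{0,\dots,t\}\big],$$ and for every $\epsilon>0$ there is $t_0$ such that for all $t\ge t_0$, $$\mathbf P[Y_0\in\mathcal C,\,Y_t\in\mathcal C]-\mathbf P[Y_0\in\mathcal C]^2\ge\big(\tfrac12-\epsilon\big)\,\mathbf P\big[Y_s\in\mathcal C\ \forall s\in\{0,\dots,t\}\big].$$
   Context: The graph has vertex set $\mathbb Z^*=\mathbb Z\setminus\{0\}$ and edges: nearest-neighbour edges $\{n,n+1\}$ and $\{-(n+1),-n\}$ for $n\ge1$, the edge $\{-1,1\}$, and a self-loop at every vertex. Conductances: $c_{n,n+1}=c_{-(n+1),-n}=n^{-\beta}$ for $n\ge1$; $c_{-1,1}=c_{1,1}=c_{-1,-1}=1/2$; and for $|n|\ge2$ the self-loop conductance is $c_{n,n}=c_{n,n-1}+c_{n,n+1}$. The discrete-time walk moves from $x$ to $y$ with probability $c_{x,y}/\pi(x)$, where $\pi(x)=\sum_y c_{x,y}$ (self-loop counted once); it is run in stationarity (started from normalized $\pi$), with law $\mathbf P$. *)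

From Stdlib Require Import Reals ZArith List Bool.
Open Scope bool_scope.
Import ListNotations.
Open Scope R_scope.

(* Vertices of Z* are encoded as integers x <> 0; the integer 0 is a dummy
   vertex with zero conductance (never reached). Every edge {x,y} of the graph
   satisfies |x - y| <= 2, so neighbourhoods are enumerated by offsets. *)

Definition cedge (beta : R) (x y : Z) : R :=
  if ((x =? -1)%Z && (y =? 1)%Z) || ((x =? 1)%Z && (y =? -1)%Z) then 1/2
  else if (Z.abs (x - y) =? 1)%Z &&
          (((1 <=? x)%Z && (1 <=? y)%Z) || ((x <=? -1)%Z && (y <=? -1)%Z))
  then Rpower (IZR (Z.min (Z.abs x) (Z.abs y))) (- beta)
  else 0.

Definition cond (beta : R) (x y : Z) : R :=
  if (x =? y)%Z then
    (if (Z.abs x =? 1)%Z then 1/2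
     else if (x =? 0)%Z then 0
     else cedge beta x (x - 1) + cedge beta x (x + 1))
  else cedge beta x y.

Definition offsets : list Z := [(-2)%Z; (-1)%Z; 0%Z; 1%Z; 2%Z].

(* pi(x) = sum_y c_{x,y} (self-loop counted once). *)
Definition piw (beta : R) (x : Z) : R :=
  fold_right Rplus 0 (map (fun d => cond beta x (x + d)) offsets).

Definition trans (beta : R) (x y : Z) : R := cond beta x y / piw beta x.

Definition inC (x : Z) : R := if (1 <=? x)%Z then 1 else 0.

(* hitC beta t x = P_x[Y_t in C]. *)
Fixpoint hitC (beta : R) (t : nat) (x : Z) : R :=
  match t with
  | O => inC x
  | S t' => fold_right Rplus 0
              (map (fun d => trans beta x (x + d) * hitC beta t' (x + d)) offsets)
  end.

(* stayC beta t x = P_x[Y_s in C for all s in {0,...,t}]. *)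
Fixpoint stayC (beta : R) (t : nat) (x : Z) : R :=
  match t with
  | O => inC x
  | S t' => inC x * fold_right Rplus 0
              (map (fun d => trans beta x (x + d) * stayC beta t' (x + d)) offsets)
  end.

Definition posv (n : nat) : Z := Z.of_nat (S n).
Definition negv (n : nat) : Z := (- Z.of_nat (S n))%Z.

(* Series whose sums are: total mass of pi, unnormalized P[Y_0 in C],
   unnormalized P[Y_0 in C, Y_t in C], unnormalized P[Y_s in C, s<=t]. *)
Definition mass_series (beta : R) (n : nat) : R := piw beta (posv n) + piw beta (negv n).
Definition C_series (beta : R) (n : nat) : R := piw beta (posv n).
Definition joint_series (beta : R) (t : nat) (n : nat) : R :=
  piw beta (posv n) * hitC beta t (posv n).
Definition stay_series (beta : R) (t : nat) (n : nat) : R :=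
  piw beta (posv n) * stayC beta t (posv n).

(* Correlation of the occupation of C = {1, 2, ...} for the stationary walk
   on Z* with conductances n^-beta, 1 < beta < 2.  Let m = pi(C),
   sigma_t(p) = P_(p+1)[Y_0..Y_t in C], gamma_t(p) = P_(p+1)[Y_t in C] - 1/2
   and w_t = sigma_t/2 - gamma_t.
   - The reflection x |-> -x is an automorphism of the graph, so the total
     mass is 2m and P_(-x)[Y_t in C] = 1 - P_x[Y_t in C]; both inequalities
     reduce to 0 <= sum pi w_t <= eps * sum pi sigma_t.
   - On C the walk is a pi-reversible birth-death chain K killed at rate 1/4
     at the vertex 1: sigma_(t+1) = K sigma_t and, by the reflection,
     gamma_(t+1) = K gamma_t - gamma_t(0)/4 at 1; so 0 <= gamma_t <= sigma_t/2.
   - A Duhamel formula for reversible birth-death operators writes sum pi w_t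
     as a convolution of gamma_k(0), sigma_k(0) and bounds sum_k sigma_k(0)
     by 2m; a convolution estimate then gives sum pi w_t <= 4 m^2 / t, while
     the vertices in [t+1, 2t+1] give sum pi sigma_t >= (t+1)(2t+1)^-beta. *)

From Stdlib Require Import Reals Lra Lia ZArith List.
Open Scope R_scope.

Ltac decide_Z_tests :=
  repeat (match goal with
  | |- context [Z.eqb ?a ?b] => destruct (Z.eqb_spec a b)
  | |- context [Z.leb ?a ?b] => destruct (Z.leb_spec a b) end; try (exfalso; lia));
  cbn [andb orb].

Lemma Rpower_pos (a b : R) : 0 < Rpower a b.
Proof. apply exp_pos. Qed.

Section Graph.
Variable beta : R.

Lemma cedge_opp x y : cedge beta (-x) (-y) = cedge beta x y.
Proof.
  unfold cedge. replace (-x - -y)%Z with (-(x-y))%Z by ring.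
  rewrite !Z.abs_opp. decide_Z_tests; reflexivity.
Qed.

Lemma cond_opp x y : cond beta (-x) (-y) = cond beta x y.
Proof.
  unfold cond. rewrite Z.abs_opp.
  replace (- x - 1)%Z with (-(x+1))%Z by ring.
  replace (- x + 1)%Z with (-(x-1))%Z by ring.
  rewrite !cedge_opp. decide_Z_tests; try reflexivity; ring.
Qed.

Lemma piw_opp x : piw beta (-x) = piw beta x.
Proof.
  unfold piw; cbn [map fold_right offsets].
  replace (-x + -2)%Z with (-(x+2))%Z by ring.
  replace (-x + -1)%Z with (-(x+1))%Z by ring.
  replace (-x + 0)%Z with (-(x+0))%Z by ring.
  replace (-x + 1)%Z with (-(x + -1))%Z by ring.
  replace (-x + 2)%Z with (-(x + -2))%Z by ring.
  rewrite !cond_opp. ring.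
Qed.

Lemma trans_opp x y : trans beta (-x) (-y) = trans beta x y.
Proof. unfold trans. rewrite cond_opp, piw_opp. reflexivity. Qed.

Lemma cond_nonneg x y : 0 <= cond beta x y.
Proof.
  assert (Hedge : forall u v, 0 <= cedge beta u v).
  { intros u v. unfold cedge. destruct (_ || _)%bool; [lra|].
    destruct (_ && _)%bool; [left; apply Rpower_pos | lra]. }
  unfold cond. destruct (x =? y)%Z; [|apply Hedge].
  destruct (Z.abs x =? 1)%Z; [lra|]. destruct (x =? 0)%Z; [lra|].
  pose proof (Hedge x (x-1)%Z); pose proof (Hedge x (x+1)%Z); lra.
Qed.

Lemma piw_ge_right_edge x : (1 <= x)%Z -> Rpower (IZR x) (-beta) <= piw beta x.
Proof.
  intro Hx.
  assert (Hright : cond beta x (x+1) = Rpower (IZR x) (-beta)).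
  { unfold cond, cedge. replace (Z.min (Z.abs x) (Z.abs (x+1))) with x by lia.
    decide_Z_tests; reflexivity. }
  rewrite <- Hright. unfold piw; cbn [map fold_right offsets].
  pose proof (cond_nonneg x (x + -2)); pose proof (cond_nonneg x (x + -1)).
  pose proof (cond_nonneg x (x + 0)); pose proof (cond_nonneg x (x + 2)). lra.
Qed.

Lemma piw_pos x : x <> 0%Z -> 0 < piw beta x.
Proof.
  intro Hx. destruct (Z.le_gt_cases 1 x).
  - eapply Rlt_le_trans; [apply Rpower_pos | apply piw_ge_right_edge; auto].
  - rewrite <- piw_opp.
    eapply Rlt_le_trans; [apply Rpower_pos | apply piw_ge_right_edge; lia].
Qed.

Lemma trans_nonneg x y : 0 <= trans beta x y.
Proof.
  unfold trans, Rdiv. apply Rmult_le_pos; [apply cond_nonneg|].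
  assert (Hpiw : 0 <= piw beta x).
  { unfold piw; cbn [map fold_right offsets].
    pose proof (cond_nonneg x (x + -2)); pose proof (cond_nonneg x (x + -1));
    pose proof (cond_nonneg x (x + 0)); pose proof (cond_nonneg x (x + 1));
    pose proof (cond_nonneg x (x + 2)). lra. }
  destruct Hpiw as [Hpos | <-].
  - apply Rlt_le, Rinv_0_lt_compat, Hpos.
  - rewrite Rinv_0; lra.
Qed.

Lemma trans_row_sum x : x <> 0%Z ->
  fold_right Rplus 0 (map (fun d => trans beta x (x + d)) offsets) = 1.
Proof.
  intro Hx. pose proof (piw_pos x Hx). unfold trans, piw in *.
  cbn [map fold_right offsets] in *. field. lra.
Qed.

Lemma trans_to_dummy x : trans beta x 0 = 0.
Proof. unfold trans, cond, cedge. decide_Z_tests; unfold Rdiv; ring. Qed.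

Lemma trans_no_left_jump x : (2 <= x)%Z -> trans beta x (x + -2) = 0.
Proof. intro. unfold trans, cond, cedge. decide_Z_tests; unfold Rdiv; ring. Qed.

Lemma trans_no_right_jump x : (1 <= x)%Z -> trans beta x (x + 2) = 0.
Proof. intro. unfold trans, cond, cedge. decide_Z_tests; unfold Rdiv; ring. Qed.

Lemma piw_one : piw beta 1 = 2.
Proof.
  unfold piw, cond, cedge; cbn. replace (Z.min 1 2) with 1%Z by reflexivity.
  unfold Rpower. rewrite ln_1, Rmult_0_r, exp_0. lra.
Qed.

Lemma trans_one_to_minus_one : trans beta 1 (-1) = 1/4.
Proof. unfold trans. rewrite piw_one. unfold cond, cedge; cbn. field. Qed.

Lemma trans_one_loop : trans beta 1 1 = 1/4.
Proof. unfold trans. rewrite piw_one. unfold cond, cedge; cbn. field. Qed.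

Lemma detailed_balance x : (1 <= x)%Z ->
  piw beta x * trans beta x (x+1) = piw beta (x+1) * trans beta (x+1) (x+1 + -1).
Proof.
  intro Hx. pose proof (piw_pos x ltac:(lia)). pose proof (piw_pos (x+1) ltac:(lia)).
  unfold trans. replace (x+1 + -1)%Z with x by ring.
  assert (Hsym : cond beta (x+1) x = cond beta x (x+1)).
  { unfold cond, cedge.
    replace (Z.min (Z.abs (x + 1)) (Z.abs x)) with x by lia.
    replace (Z.min (Z.abs x) (Z.abs (x + 1))) with x by lia.
    replace (x + 1 - x)%Z with 1%Z by ring. replace (x - (x + 1))%Z with (-1)%Z by ring.
    decide_Z_tests; reflexivity. }
  rewrite Hsym. field. split; lra.
Qed.

End Graph.

Fixpoint sumn (f : nat -> R) (n : nat) : R :=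
  match n with O => 0 | S n' => sumn f n' + f n' end.

Lemma sumn_ext_lt f g n : (forall k, (k < n)%nat -> f k = g k) -> sumn f n = sumn g n.
Proof.
  induction n as [|n IH]; intro H; simpl; [reflexivity|].
  rewrite IH by (intros; apply H; lia). rewrite H by lia. reflexivity.
Qed.

Lemma sumn_le f g n : (forall k, (k < n)%nat -> f k <= g k) -> sumn f n <= sumn g n.
Proof.
  induction n as [|n IH]; intro H; simpl; [lra|].
  apply Rplus_le_compat; [apply IH; intros; apply H|apply H]; lia.
Qed.

Lemma sumn_plus f g n : sumn (fun k => f k + g k) n = sumn f n + sumn g n.
Proof. induction n as [|n IH]; simpl; [ring|]. rewrite IH. ring. Qed.

Lemma sumn_scal a f n : sumn (fun k => a * f k) n = a * sumn f n.
Proof. induction n as [|n IH]; simpl; [ring|]. rewrite IH. ring. Qed.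

Lemma sumn_const c n : sumn (fun _ => c) n = INR n * c.
Proof. induction n as [|n IH]; simpl sumn; [simpl; ring|]. rewrite IH, S_INR. ring. Qed.

Lemma sumn_nonneg f n : (forall k, 0 <= f k) -> 0 <= sumn f n.
Proof. intro H. rewrite <- (Rmult_0_r (INR n)), <- sumn_const. apply sumn_le; auto. Qed.

Lemma sumn_shift f n : sumn f (S n) = f 0%nat + sumn (fun k => f (S k)) n.
Proof.
  induction n as [|n IH]; [simpl; ring|].
  change (sumn f (S (S n))) with (sumn f (S n) + f (S n)). rewrite IH. simpl. ring.
Qed.

Lemma sumn_rev f n : sumn (fun k => f (n - S k)%nat) n = sumn f n.
Proof.
  induction n as [|n IH]; [reflexivity|].
  rewrite sumn_shift. simpl sumn at 2. replace (S n - 1)%nat with n by lia.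
  rewrite <- IH.
  change (fun k => f (S n - S (S k))%nat) with (fun k => f (n - S k)%nat). ring.
Qed.

(* One of the two factors
   always has index [>= (t-1)/2] and is then at most [2U/t]. *)
Lemma convolution_bound (u : nat -> R) U t :
  (forall k, 0 <= u k) -> (forall k, u (S k) <= u k) -> (forall n, sumn u n <= U) ->
  (1 <= t)%nat -> sumn (fun k => u k * u (t - S k)%nat) t <= 4 * U * U / INR t.
Proof.
  intros Hu0 Hdec HU Ht.
  assert (Hmono : forall i j, (i <= j)%nat -> u j <= u i).
  { intros i j Hij. induction Hij as [|j _ IH]; [lra|]. pose proof (Hdec j). lra. }
  assert (Hh : exists h, (2 * h + 1 <= t <= 2 * h + 2)%nat).
  { destruct (Nat.Even_or_Odd t) as [[h Hh]|[h Hh]]; [exists (h - 1)%nat | exists h]; lia. }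
  destruct Hh as [h Hh].
  assert (Hth : INR t <= 2 * INR (S h)).
  { assert (INR t <= INR (2 * S h)) by (apply le_INR; lia).
    rewrite mult_INR in *. simpl (INR 2) in *. lra. }
  assert (Hhead : INR (S h) * u h <= U).
  { eapply Rle_trans; [|apply (HU (S h))]. rewrite <- sumn_const.
    apply sumn_le. intros. apply Hmono. lia. }
  assert (Hmid : forall k, (k < t)%nat -> u k * u (t - S k)%nat <= u h * (u k + u (t - S k)%nat)).
  { intros k Hk. pose proof (Hu0 k); pose proof (Hu0 (t - S k)%nat).
    destruct (Nat.le_gt_cases h k).
    - pose proof (Hmono h k ltac:(lia)). nra.
    - pose proof (Hmono h (t - S k)%nat ltac:(lia)). nra. }
  pose proof (sumn_le _ _ _ Hmid) as Hconv.
  rewrite sumn_scal, sumn_plus, (sumn_rev u t) in Hconv.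
  pose proof (HU t); pose proof (sumn_nonneg u t Hu0); pose proof (Hu0 h).
  assert (Ht0 : 0 < INR t) by (apply lt_0_INR; lia).
  apply (Rmult_le_reg_r (INR t)); auto. unfold Rdiv.
  rewrite Rmult_assoc, Rinv_l, Rmult_1_r by lra.
  assert (u h * INR t <= 2 * U) by nra. nra.
Qed.

Lemma series_ext f g l : (forall n, f n = g n) -> infinite_sum f l -> infinite_sum g l.
Proof.
  intros E H e He. destruct (H e He) as [N HN]. exists N. intros n Hn.
  rewrite <- (sum_eq f g n (fun i _ => E i)). apply HN; auto.
Qed.

Lemma series_lincomb f g a b x y : infinite_sum f a -> infinite_sum g b ->
  infinite_sum (fun n => x * f n + y * g n) (x * a + y * b).
Proof.
  intros Hf Hg.
  assert (Hconst : forall c, Un_cv (fun _ => c) c).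
  { intros c e He. exists 0%nat. intros. unfold Rdist. rewrite Rminus_diag, Rabs_R0. lra. }
  assert (E : forall N, sum_f_R0 (fun n => x * f n + y * g n) N
                        = x * sum_f_R0 f N + y * sum_f_R0 g N).
  { intro N. rewrite sum_plus, !scal_sum. f_equal; apply sum_eq; intros; ring. }
  intros e He.
  destruct (CV_plus _ _ _ _ (CV_mult _ _ _ _ (Hconst x) Hf) (CV_mult _ _ _ _ (Hconst y) Hg) e He)
    as [N HN].
  exists N. intros n Hn. rewrite E. apply HN. auto.
Qed.

Lemma series_le_of_partial f l A : infinite_sum f l -> (forall N, sum_f_R0 f N <= A) -> l <= A.
Proof.
  intros H HA. eapply Rle_cv_lim; [exact HA | exact H |].
  intros e He. exists 0%nat. intros. unfold Rdist. rewrite Rminus_diag, Rabs_R0. lra.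
Qed.

Lemma partial_sum_mono f M M' : (forall n, 0 <= f n) -> (M <= M')%nat ->
  sum_f_R0 f M <= sum_f_R0 f M'.
Proof.
  intros H0 HM. induction HM as [|M' _ IH]; [lra|]. rewrite tech5. pose proof (H0 (S M')). lra.
Qed.

Lemma partial_sum_ge_block f q a n : (forall p, 0 <= f p) ->
  (forall p, (a <= p <= a + n)%nat -> q <= f p) -> INR (S n) * q <= sum_f_R0 f (a + n).
Proof.
  intros H0 Hq. induction n as [|n IH].
  - rewrite Nat.add_0_r. simpl INR. rewrite Rmult_1_l. destruct a as [|a].
    + simpl. apply Hq. lia.
    + rewrite tech5. pose proof (cond_pos_sum f a H0). pose proof (Hq (S a) ltac:(lia)). lra.
  - replace (a + S n)%nat with (S (a + n)) by lia. rewrite tech5, S_INR.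
    pose proof (IH (fun p Hp => Hq p ltac:(lia))). pose proof (Hq (S (a + n)) ltac:(lia)). lra.
Qed.

Definition at_origin (c : R) (p : nat) : R := match p with O => c | S _ => 0 end.

Section BirthDeath.
Variables down stay up : nat -> R.

Definition bd_op (f : nat -> R) (p : nat) : R :=
  match p with
  | O => stay 0 * f 0%nat + up 0 * f 1%nat
  | S q => down (S q) * f q + stay (S q) * f (S q) + up (S q) * f (S (S q))
  end.

Lemma bd_op_ext f g p : (forall q, f q = g q) -> bd_op f p = bd_op g p.
Proof. intro H. destruct p; unfold bd_op; rewrite !H; reflexivity. Qed.

Lemma bd_op_lincomb a b f g p :
  bd_op (fun q => a * f q + b * g q) p = a * bd_op f p + b * bd_op g p.
Proof. destruct p; unfold bd_op; ring. Qed.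

Lemma bd_op_mono f g p :
  (forall q, 0 <= down q /\ 0 <= stay q /\ 0 <= up q) ->
  (forall q, f q <= g q) -> bd_op f p <= bd_op g p.
Proof.
  intros Hc H. destruct p as [|q]; unfold bd_op.
  - destruct (Hc 0%nat) as (_ & ? & ?).
    apply Rplus_le_compat; apply Rmult_le_compat_l; auto.
  - destruct (Hc (S q)) as (? & ? & ?).
    repeat apply Rplus_le_compat; apply Rmult_le_compat_l; auto.
Qed.

Fixpoint bd_iter (n : nat) (h : nat -> R) : nat -> R :=
  match n with O => h | S n' => bd_iter n' (bd_op h) end.

Lemma bd_iter_succ n : forall h p, bd_iter n (bd_op h) p = bd_op (bd_iter n h) p.
Proof. induction n as [|n IH]; intros h p; [reflexivity|]. apply IH. Qed.

Variable w : nat -> R.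
Hypothesis balance : forall M, w (S M) * down (S M) = w M * up M.

(* Summation by parts: the operator is self-adjoint for [w] up to a boundary
   term at the truncation level [M]. *)
Lemma bd_green f g M :
  sum_f_R0 (fun p => w p * (f p * bd_op g p - bd_op f p * g p)) M
  = w M * up M * (f M * g (S M) - f (S M) * g M).
Proof.
  induction M as [|M IH]; [simpl; unfold bd_op; ring|].
  rewrite tech5, IH, <- balance. unfold bd_op at 1 2. ring.
Qed.

Lemma sum_at_origin c h M :
  sum_f_R0 (fun p => w p * (at_origin c p * h p)) M = w 0 * c * h 0%nat.
Proof. induction M as [|M IH]; [simpl; ring|]. rewrite tech5, IH. simpl. ring. Qed.

Lemma bd_duhamel (v : nat -> nat -> R) (c : nat -> R) :
  (forall p, v 0%nat p = 0) ->
  (forall t p, v (S t) p = bd_op (v t) p + at_origin (c t) p) ->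
  (forall t p, (t <= p)%nat -> v t p = 0) ->
  forall t h M, (t <= M)%nat ->
  sum_f_R0 (fun p => w p * (v t p * h p)) M
  = w 0 * sumn (fun k => c k * bd_iter (t - S k) h 0%nat) t.
Proof.
  intros Hv0 HvS Hsupp t. induction t as [|t IH]; intros h M HM.
  - transitivity (sum_f_R0 (fun _ => 0) M).
    + apply sum_eq. intros p _. rewrite Hv0. ring.
    + rewrite sum_cte. simpl. ring.
  - assert (Hsplit : forall p, w p * (v (S t) p * h p) =
        w p * (v t p * bd_op h p)
        - w p * (v t p * bd_op h p - bd_op (v t) p * h p)
        + w p * (at_origin (c t) p * h p)).
    { intro p. rewrite HvS. ring. }
    rewrite (sum_eq _ _ _ (fun p _ => Hsplit p)), sum_plus, minus_sum, bd_green,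
      sum_at_origin, IH by lia.
    rewrite (Hsupp t M), (Hsupp t (S M)) by lia.
    simpl sumn. rewrite Nat.sub_diag.
    rewrite (sumn_ext_lt (fun k => c k * bd_iter (S t - S k) h 0%nat)
               (fun k => c k * bd_iter (t - S k) (bd_op h) 0%nat)).
    + simpl. ring.
    + intros k Hk. replace (S t - S k)%nat with (S (t - S k)) by lia. reflexivity.
Qed.

End BirthDeath.

(* The walk seen from the positive half-line [C = {1, 2, ...}], indexed by
   [p : nat] through [posv p = p + 1]. *)
Section HalfLine.
Variable beta : R.

Definition step (p : nat) (d : Z) : R := trans beta (posv p) (posv p + d).

(* The sub-Markov kernel of the walk killed when it leaves [C]. *)
Definition half_op : (nat -> R) -> nat -> R :=
  bd_op (fun p => step p (-1)) (fun p => step p 0) (fun p => step p 1).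

Definition weight (p : nat) : R := piw beta (posv p).

(* [stay_prob t p] = P_(p+1)[Y_0, ..., Y_t in C];
   [hit_excess t p] = P_(p+1)[Y_t in C] - 1/2;
   [deficit t p] = stay_prob / 2 - hit_excess, the quantity whose weighted
   sum measures the gap in the main inequality. *)
Definition stay_prob (t p : nat) : R := stayC beta t (posv p).
Definition hit_excess (t p : nat) : R := hitC beta t (posv p) - 1/2.
Definition deficit (t p : nat) : R := stay_prob t p / 2 - hit_excess t p.

Lemma posv_succ p : posv (S p) = (posv p + 1)%Z.
Proof. unfold posv. lia. Qed.

Lemma inC_posv p : inC (posv p) = 1.
Proof. unfold inC, posv. destruct (Z.leb_spec 1 (Z.of_nat (S p))); [reflexivity | lia]. Qed.

Lemma step_nonneg p d : 0 <= step p d.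
Proof. apply trans_nonneg. Qed.

Lemma half_op_mono f g p : (forall q, f q <= g q) -> half_op f p <= half_op g p.
Proof. apply bd_op_mono. intro q. repeat split; apply step_nonneg. Qed.

Lemma step_row_sum p : (1 <= p)%nat -> step p (-1) + step p 0 + step p 1 = 1.
Proof.
  intro Hp. pose proof (trans_row_sum beta (posv p) ltac:(unfold posv; lia)) as Hrow.
  cbn [fold_right map offsets] in Hrow.
  rewrite trans_no_left_jump, trans_no_right_jump in Hrow by (unfold posv; lia).
  unfold step. lra.
Qed.

Lemma step_origin : step 0 0 = 1/4 /\ step 0 1 = 1/2.
Proof.
  pose proof (trans_row_sum beta 1 ltac:(lia)) as Hrow. cbn in Hrow.
  rewrite trans_one_to_minus_one, trans_to_dummy, trans_one_loop, trans_no_right_jump in Hrow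
    by lia.
  unfold step, posv; cbn. rewrite trans_one_loop. split; lra.
Qed.

(* The only loss of mass of the killed kernel is the jump [1 -> -1]. *)
Lemma half_op_one p : half_op (fun _ => 1) p = 1 - at_origin (1/4) p.
Proof.
  unfold half_op, bd_op, at_origin. destruct p as [|p].
  - destruct step_origin as [H0 H1]. rewrite H0, H1. lra.
  - pose proof (step_row_sum (S p) ltac:(lia)). lra.
Qed.

Lemma weight_balance M : weight (S M) * step (S M) (-1) = weight M * step M 1.
Proof. unfold weight, step. rewrite (posv_succ M). symmetry. apply detailed_balance. unfold posv; lia. Qed.

Lemma stayC_nonpositive t x : (x <= 0)%Z -> stayC beta t x = 0.
Proof. intro H. destruct t; cbn [stayC]; unfold inC; destruct (Z.leb_spec 1 x); try lia; ring. Qed.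

(* Evaluates the neighbours [1 + d] of the vertex 1, keeping [1 + 2] in the
   shape expected by [trans_no_right_jump]. *)
Ltac neighbours_of_one :=
  change (1 + -2)%Z with (-1)%Z in *; change (1 + -1)%Z with 0%Z in *;
  change (1 + 0)%Z with 1%Z in *; change (1 + 1)%Z with 2%Z in *.

Lemma stay_prob_succ t p : stay_prob (S t) p = half_op (stay_prob t) p.
Proof.
  unfold stay_prob, half_op, bd_op, step. cbn [stayC fold_right map offsets]. rewrite inC_posv.
  destruct p as [|q].
  - change (posv 0) with 1%Z. change (posv 1) with 2%Z. neighbours_of_one.
    rewrite (stayC_nonpositive t (-1)), trans_to_dummy, trans_no_right_jump by lia. ring.
  - rewrite trans_no_left_jump, trans_no_right_jump by (unfold posv; lia).
    replace (posv q) with (posv (S q) + -1)%Z by (unfold posv; lia).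
    rewrite (posv_succ (S q)), !Z.add_0_r. ring.
Qed.

Lemma hit_reflection t : forall x, x <> 0%Z -> hitC beta t (-x) = 1 - hitC beta t x.
Proof.
  induction t as [|t IH]; intros x Hx.
  - cbn [hitC]. unfold inC.
    destruct (Z.leb_spec 1 (-x)); destruct (Z.leb_spec 1 x); try lia; ring.
  - assert (Hterm : forall y, trans beta x y * hitC beta t (-y)
                            = trans beta x y * (1 - hitC beta t y)).
    { intro y. destruct (Z.eq_dec y 0) as [->|Hy].
      - rewrite trans_to_dummy. ring.
      - rewrite IH by exact Hy. reflexivity. }
    pose proof (trans_row_sum beta x Hx). cbn [hitC fold_right map offsets] in *.
    replace (-x + -2)%Z with (-(x + 2))%Z by ring.
    replace (-x + -1)%Z with (-(x + 1))%Z by ring.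
    replace (-x + 0)%Z with (-(x + 0))%Z by ring.
    replace (-x + 1)%Z with (-(x + -1))%Z by ring.
    replace (-x + 2)%Z with (-(x + -2))%Z by ring.
    rewrite !trans_opp, !Hterm. lra.
Qed.

(* By reflection, the excess is propagated by the killed kernel with a
   correction at the origin: the jump [1 -> -1] contributes [-excess]. *)
Lemma hit_excess_succ t p :
  hit_excess (S t) p = half_op (hit_excess t) p - at_origin (1/4 * hit_excess t 0) p.
Proof.
  unfold hit_excess, half_op, bd_op, step, at_origin.
  pose proof (trans_row_sum beta (posv p) ltac:(unfold posv; lia)) as Hrow.
  cbn [hitC fold_right map offsets] in *.
  destruct p as [|q].
  - change (posv 0) with 1%Z in *. change (posv 1) with 2%Z. neighbours_of_one.
    replace (hitC beta t (-1)) with (1 - hitC beta t 1)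
      by (rewrite <- (hit_reflection t 1) by lia; reflexivity).
    rewrite !trans_to_dummy, !trans_no_right_jump, !trans_one_to_minus_one, !trans_one_loop in *
      by lia.
    lra.
  - rewrite !trans_no_left_jump, !trans_no_right_jump in * by (unfold posv; lia).
    replace (posv q) with (posv (S q) + -1)%Z by (unfold posv; lia).
    rewrite (posv_succ (S q)), !Z.add_0_r in *. lra.
Qed.

Lemma far_from_boundary t : forall x, (Z.of_nat t < x)%Z ->
  stayC beta t x = 1 /\ hitC beta t x = 1.
Proof.
  induction t as [|t IH]; intros x Hx.
  - cbn [stayC hitC]. unfold inC. destruct (Z.leb_spec 1 x); [split; reflexivity | lia].
  - pose proof (trans_row_sum beta x ltac:(lia)) as Hrow.
    cbn [stayC hitC fold_right map offsets] in *. unfold inC.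
    destruct (Z.leb_spec 1 x); [|lia].
    rewrite trans_no_left_jump in * by lia.
    destruct (IH (x + -1)%Z ltac:(lia)) as [-> ->], (IH (x + 0)%Z ltac:(lia)) as [-> ->],
      (IH (x + 1)%Z ltac:(lia)) as [-> ->], (IH (x + 2)%Z ltac:(lia)) as [-> ->].
    split; lra.
Qed.

Lemma deficit_far t p : (t <= p)%nat -> stay_prob t p = 1 /\ deficit t p = 0.
Proof.
  intro H. unfold deficit, hit_excess, stay_prob.
  destruct (far_from_boundary t (posv p) ltac:(unfold posv; lia)) as [-> ->]. split; lra.
Qed.

Lemma half_op_nonneg f p : (forall q, 0 <= f q) -> 0 <= half_op f p.
Proof.
  intro H. unfold half_op, bd_op.
  destruct p; repeat apply Rplus_le_le_0_compat; apply Rmult_le_pos; auto using step_nonneg.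
Qed.

Lemma half_op_le_one f p : (forall q, f q <= 1) -> half_op f p <= 1.
Proof.
  intro H. apply Rle_trans with (half_op (fun _ => 1) p); [apply half_op_mono; exact H|].
  rewrite half_op_one. destruct p; simpl; lra.
Qed.

Lemma excess_bounds t p :
  0 <= hit_excess t p /\ hit_excess t p <= stay_prob t p / 2 /\
  stay_prob t p <= 1 /\ 0 <= stay_prob t p.
Proof.
  revert p; induction t as [|t IH]; intro p.
  - unfold hit_excess, stay_prob. cbn [hitC stayC]. rewrite inC_posv. lra.
  - assert (Hstay : 0 <= stay_prob (S t) p <= 1).
    { rewrite stay_prob_succ.
      split; [apply half_op_nonneg | apply half_op_le_one]; intro q; pose proof (IH q); lra. }
    assert (Hup : half_op (hit_excess t) p <= stay_prob (S t) p / 2).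
    { rewrite stay_prob_succ.
      replace (half_op (stay_prob t) p / 2)
        with (half_op (fun q => /2 * stay_prob t q + 0 * stay_prob t q) p)
        by (unfold half_op; rewrite bd_op_lincomb; lra).
      apply half_op_mono; intro q; pose proof (IH q); lra. }
    assert (Hlo : 0 <= half_op (hit_excess t) p) by (apply half_op_nonneg; intro q; apply IH).
    rewrite hit_excess_succ. destruct p as [|p]; simpl at_origin.
    + pose proof (IH 0%nat). pose proof (IH 1%nat).
      unfold half_op, bd_op in *. destruct step_origin as [Hloop Hup1]. rewrite Hloop, Hup1 in *.
      repeat split; lra.
    + repeat split; lra.
Qed.

Lemma stay_prob_decr t p : stay_prob (S t) p <= stay_prob t p.
Proof.
  revert p; induction t as [|t IH]; intro p.
  - pose proof (excess_bounds 1 p). unfold stay_prob at 2. cbn [stayC]. rewrite inC_posv. lra.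
  - rewrite (stay_prob_succ (S t)), (stay_prob_succ t). apply half_op_mono. apply IH.
Qed.

Definition half_iter : nat -> (nat -> R) -> nat -> R :=
  bd_iter (fun p => step p (-1)) (fun p => step p 0) (fun p => step p 1).

Lemma half_iter_one n p : half_iter n (fun _ => 1) p = stay_prob n p.
Proof.
  revert p; induction n as [|n IH]; intro p.
  - unfold stay_prob. cbn [stayC]. rewrite inC_posv. reflexivity.
  - change (half_iter (S n) (fun _ => 1) p) with (half_iter n (half_op (fun _ => 1)) p).
    unfold half_iter, half_op. rewrite bd_iter_succ, stay_prob_succ. apply bd_op_ext. apply IH.
Qed.

Lemma deficit_succ t p :
  deficit (S t) p = half_op (deficit t) p + at_origin (1/4 * hit_excess t 0) p.
Proof.
  unfold half_op.
  rewrite (bd_op_ext _ _ _ (deficit t) (fun q => /2 * stay_prob t q + -1 * hit_excess t q))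
    by (intro q; unfold deficit; lra).
  rewrite bd_op_lincomb. fold half_op.
  unfold deficit at 1. rewrite stay_prob_succ, hit_excess_succ. lra.
Qed.

Lemma deficit_duhamel t M : (t <= M)%nat ->
  sum_f_R0 (fun p => weight p * deficit t p) M
  = weight 0 * sumn (fun k => 1/4 * hit_excess k 0 * stay_prob (t - S k) 0) t.
Proof.
  intro HM.
  rewrite (sum_eq _ (fun p => weight p * (deficit t p * 1))) by (intros; ring).
  rewrite (bd_duhamel (fun p => step p (-1)) (fun p => step p 0) (fun p => step p 1)
                       weight weight_balance deficit (fun k => 1/4 * hit_excess k 0)).
  - f_equal. apply sumn_ext_lt. intros k _. fold half_iter. rewrite half_iter_one. reflexivity.
  - intro p. unfold deficit, stay_prob, hit_excess. cbn [stayC hitC]. rewrite inC_posv. lra.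
  - exact deficit_succ.
  - intros s p Hp. exact (proj2 (deficit_far s p Hp)).
  - exact HM.
Qed.

(* The weighted mass that has left [C] by time [t] is the time spent at the
   origin, times the escape rate 1/4. *)
Lemma escape_duhamel t M : (t <= M)%nat ->
  sum_f_R0 (fun p => weight p * (1 - stay_prob t p)) M
  = weight 0 * sumn (fun k => 1/4 * stay_prob k 0) t.
Proof.
  intro HM.
  rewrite (sum_eq _ (fun p => weight p * ((1 - stay_prob t p) * 1))) by (intros; ring).
  rewrite (bd_duhamel (fun p => step p (-1)) (fun p => step p 0) (fun p => step p 1)
                       weight weight_balance (fun t p => 1 - stay_prob t p) (fun _ => 1/4)).
  - f_equal. rewrite <- (sumn_rev (fun k => 1/4 * stay_prob k 0)).
    apply sumn_ext_lt. intros k _. fold half_iter. rewrite half_iter_one. reflexivity.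
  - intro p. unfold stay_prob. cbn [stayC]. rewrite inC_posv. ring.
  - intros s p. rewrite stay_prob_succ.
    rewrite (bd_op_ext _ _ _ (fun p => 1 - stay_prob s p)
               (fun q => 1 * 1 + -1 * stay_prob s q)) by (intro; ring).
    rewrite bd_op_lincomb. fold half_op.
    rewrite half_op_one. ring.
  - intros s p Hp. rewrite (proj1 (deficit_far s p Hp)). ring.
  - exact HM.
Qed.

Lemma weight_pos p : 0 < weight p.
Proof. apply piw_pos. unfold posv. lia. Qed.

Lemma weight_origin : weight 0 = 2.
Proof. apply piw_one. Qed.

End HalfLine.

(* Growth of the lower bound on the staying probability: for [beta < 2],
   [t (t+1) (2t+1)^-beta] grows like [t^(2-beta)] and eventually exceeds any
   given constant. *)
Lemma power_growth beta A : beta < 2 ->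
  exists t0, forall t, (t0 <= t)%nat -> A <= INR t * INR (S t) * Rpower (INR (2 * t + 1)) (-beta).
Proof.
  intro Hb. set (alpha := 2 - beta). set (B := Rmax A 1).
  assert (HB : 0 < 9 * B) by (pose proof (Rmax_r A 1); unfold B in *; lra).
  destruct (INR_archimed 1 (Rpower (9 * B) (/alpha)) ltac:(lra)) as [n Hn].
  exists (S n). intros t Ht.
  set (a := INR (2 * t + 1)).
  assert (Ht1 : 1 <= INR t) by (apply (le_INR 1); lia).
  assert (Hn_t : INR n < INR t) by (apply lt_INR; lia).
  assert (Ha : a = 2 * INR t + 1) by (unfold a; rewrite plus_INR, mult_INR; simpl; lra).
  assert (Ha_big : Rpower (9 * B) (/alpha) <= a) by lra.
  assert (Hpow : 9 * B <= Rpower a alpha).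
  { replace (9 * B) with (Rpower (Rpower (9 * B) (/alpha)) alpha)
      by (rewrite Rpower_mult, Rinv_l, Rpower_1 by (unfold alpha; lra); reflexivity).
    apply Rle_Rpower_l; [unfold alpha; lra | split; [apply Rpower_pos | exact Ha_big]]. }
  assert (Hsplit : Rpower a alpha = a * a * Rpower a (-beta)).
  { unfold alpha. replace (2 - beta) with (1 + 1 + - beta) by ring.
    rewrite !Rpower_plus, Rpower_1 by lra. reflexivity. }
  assert (Hsq : a * a <= 9 * (INR t * INR (S t))) by (rewrite S_INR, Ha; nra).
  pose proof (Rpower_pos a (-beta)). pose proof (Rmax_l A 1). fold B in H0.
  assert (a * a * Rpower a (-beta) <= 9 * (INR t * INR (S t)) * Rpower a (-beta))
    by (apply Rmult_le_compat_r; lra).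
  nra.
Qed.

(* Normalising by the total mass [2 m] turns the correlation inequality into
   a comparison of unnormalised sums. *)
Lemma normalized_gap j m s c : 0 < m ->
  j / (2 * m) - (m / (2 * m)) ^ 2 - c * (s / (2 * m)) = (j - m / 2 - c * s) / (2 * m).
Proof. intro Hm. field. lra. Qed.

Section Estimates.
Variables beta m : R.
Hypothesis Hm : infinite_sum (C_series beta) m.

(* The total mass is twice the mass of [C], by reflection symmetry. *)
Lemma mass_twice Z : infinite_sum (mass_series beta) Z -> Z = 2 * m.
Proof.
  intro HZ. apply (uniqueness_sum (mass_series beta)); auto.
  replace (2 * m) with (1 * m + 1 * m) by ring.
  apply (series_ext (fun n => 1 * C_series beta n + 1 * C_series beta n)).
  - intro n. unfold mass_series, C_series. change (negv n) with (- posv n)%Z.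
    rewrite piw_opp. ring.
  - apply series_lincomb; auto.
Qed.

Lemma weight_partial_le N : sum_f_R0 (weight beta) N <= m.
Proof. apply sum_incr; [exact Hm | intro; apply Rlt_le, weight_pos]. Qed.

Lemma two_le_m : 2 <= m.
Proof. pose proof (weight_partial_le 0). simpl in H. rewrite weight_origin in H. exact H. Qed.

(* The expected time spent at the vertex 1 while staying in [C] is at most
   [2 m]: each visit loses mass 1/4 and the total mass of [C] is [m]. *)
Lemma origin_occupation_bound n : sumn (fun k => stay_prob beta k 0) n <= 2 * m.
Proof.
  pose proof (escape_duhamel beta n n (le_n n)) as Hesc.
  rewrite weight_origin, sumn_scal in Hesc.
  assert (sum_f_R0 (fun p => weight beta p * (1 - stay_prob beta n p)) n
          <= sum_f_R0 (weight beta) n).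
  { apply sum_growing. intro p. pose proof (weight_pos beta p).
    pose proof (excess_bounds beta n p). nra. }
  pose proof (weight_partial_le n). lra.
Qed.

Lemma deficit_nonneg t p : 0 <= weight beta p * deficit beta t p.
Proof.
  pose proof (weight_pos beta p). pose proof (excess_bounds beta t p).
  unfold deficit. apply Rmult_le_pos; lra.
Qed.

Lemma deficit_partial_bound t M : (1 <= t)%nat ->
  sum_f_R0 (fun p => weight beta p * deficit beta t p) M <= 4 * m * m / INR t.
Proof.
  intro Ht.
  assert (Hlarge : forall M, (t <= M)%nat ->
            sum_f_R0 (fun p => weight beta p * deficit beta t p) M <= 4 * m * m / INR t).
  { intros M' HM. rewrite (deficit_duhamel beta t M' HM), weight_origin.
    set (u := fun k => stay_prob beta k 0).
    assert (Hconv : sumn (fun k => 1/4 * hit_excess beta k 0 * stay_prob beta (t - S k) 0) t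
                    <= / 8 * sumn (fun k => u k * u (t - S k)%nat) t).
    { rewrite <- sumn_scal. apply sumn_le. intros k _. unfold u.
      pose proof (excess_bounds beta k 0). pose proof (excess_bounds beta (t - S k) 0). nra. }
    pose proof (convolution_bound u (2 * m) t (fun k => proj2 (proj2 (proj2 (excess_bounds beta k 0))))
                  (fun k => stay_prob_decr beta k 0) origin_occupation_bound Ht).
    assert (Ht0 : 0 < INR t) by (apply lt_0_INR; lia).
    replace (4 * (2 * m) * (2 * m) / INR t) with (4 * (4 * m * m / INR t)) in H by (field; lra).
    lra. }
  destruct (Nat.le_gt_cases t M) as [HM | HM]; [apply Hlarge, HM|].
  eapply Rle_trans; [apply partial_sum_mono; [apply deficit_nonneg | apply Nat.lt_le_incl, HM]|].
  apply Hlarge, le_n.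
Qed.

Lemma deficit_series t j s :
  infinite_sum (joint_series beta t) j -> infinite_sum (stay_series beta t) s ->
  infinite_sum (fun p => weight beta p * deficit beta t p) (s / 2 - j + m / 2).
Proof.
  intros Hj Hs.
  replace (s / 2 - j + m / 2) with (1 * (/2 * s + -1 * j) + /2 * m) by field.
  apply (series_ext (fun n => 1 * (/2 * stay_series beta t n + -1 * joint_series beta t n)
                              + /2 * C_series beta n)).
  - intro n. unfold stay_series, joint_series, C_series, deficit, stay_prob, hit_excess, weight.
    field.
  - apply series_lincomb; [apply series_lincomb|]; assumption.
Qed.

(* Upper bound of the theorem: the deficit is nonnegative. *)
Lemma covariance_upper t j s :
  infinite_sum (joint_series beta t) j -> infinite_sum (stay_series beta t) s ->
  j - m / 2 - 1/2 * s <= 0.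
Proof.
  intros Hj Hs. pose proof (deficit_series t j s Hj Hs) as Hdef.
  pose proof (sum_incr _ 0 _ Hdef (deficit_nonneg t)). simpl in H.
  pose proof (deficit_nonneg t 0). lra.
Qed.

(* The walk started in [[t+1, 2t+1]] stays in [C] up to time [t]; these
   [t+1] vertices each have weight at least [(2t+1)^-beta]. *)
Lemma stay_series_lower t s : 0 <= beta ->
  infinite_sum (stay_series beta t) s -> INR (S t) * Rpower (INR (2 * t + 1)) (-beta) <= s.
Proof.
  intros Hb Hs.
  assert (Hnonneg : forall p, 0 <= stay_series beta t p).
  { intro p. pose proof (weight_pos beta p). pose proof (excess_bounds beta t p).
    change (0 <= weight beta p * stay_prob beta t p). apply Rmult_le_pos; lra. }
  eapply Rle_trans; [| apply (sum_incr _ (t + t) _ Hs Hnonneg)].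
  apply partial_sum_ge_block; [exact Hnonneg|]. intros p Hp.
  unfold stay_series. fold (stay_prob beta t p). rewrite (proj1 (deficit_far beta t p ltac:(lia))).
  rewrite Rmult_1_r. eapply Rle_trans; [| apply piw_ge_right_edge; unfold posv; lia].
  rewrite !Rpower_Ropp. apply Rinv_le_contravar; [apply Rpower_pos|].
  apply Rle_Rpower_l; [exact Hb|]. unfold posv. rewrite <- INR_IZR_INZ.
  split; [apply lt_0_INR; lia | apply le_INR; lia].
Qed.

(* Lower bound of the theorem: for [beta < 2] the deficit [O(m^2/t)] is
   eventually negligible against [s >= c t^(1-beta)]. *)
Lemma covariance_lower eps : 0 <= beta < 2 -> 0 < eps -> exists t0, forall t j s, (t0 <= t)%nat ->
  infinite_sum (joint_series beta t) j -> infinite_sum (stay_series beta t) s ->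
  (1/2 - eps) * s <= j - m / 2.
Proof.
  intros Hb Heps.
  destruct (power_growth beta (4 * m * m / eps) (proj2 Hb)) as [t0 Ht0].
  exists (max t0 1). intros t j s Ht Hj Hs.
  assert (Ht1 : (1 <= t)%nat) by lia.
  assert (HtR : 0 < INR t) by (apply lt_0_INR; lia).
  pose proof (series_le_of_partial _ _ _ (deficit_series t j s Hj Hs)
                (fun N => deficit_partial_bound t N Ht1)) as Hdef.
  pose proof (stay_series_lower t s (proj1 Hb) Hs) as Hlow.
  pose proof (Ht0 t ltac:(lia)) as Hgrow.
  assert (Hts : 4 * m * m / eps <= INR t * s).
  { rewrite (Rmult_assoc (INR t)) in Hgrow. eapply Rle_trans; [exact Hgrow|].
    apply Rmult_le_compat_l; lra. }
  assert (Hsmall : 4 * m * m / INR t <= eps * s).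
  { replace (eps * s) with (eps * (INR t * s) / INR t) by (field; lra).
    replace (4 * m * m / INR t) with (eps * (4 * m * m / eps) / INR t) by (field; lra).
    apply Rmult_le_compat_r; [left; apply Rinv_0_lt_compat, HtR|].
    apply Rmult_le_compat_l; lra. }
  lra.
Qed.

End Estimates.

Theorem mainTheorem7 (beta : R) (Hb1 : 1 < beta) (Hb2 : beta < 2)
  (Z m : R) (HZ : infinite_sum (mass_series beta) Z)
  (Hm : infinite_sum (C_series beta) m) :
  (forall (t : nat) (j s : R),
     infinite_sum (joint_series beta t) j ->
     infinite_sum (stay_series beta t) s ->
     j / Z - (m / Z) ^ 2 <= (1 / 2) * (s / Z))
  /\
  (forall eps : R, 0 < eps ->
     exists t0 : nat, forall (t : nat) (j s : R), (t0 <= t)%nat ->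
       infinite_sum (joint_series beta t) j ->
       infinite_sum (stay_series beta t) s ->
       (1 / 2 - eps) * (s / Z) <= j / Z - (m / Z) ^ 2).
Proof.
  rewrite (mass_twice beta m Hm Z HZ).
  assert (Hm_pos : 0 < m) by (pose proof (two_le_m beta m Hm); lra).
  assert (Hinv : 0 < / (2 * m)) by (apply Rinv_0_lt_compat; lra).
  split.
  - intros t j s Hj Hs.
    enough (Hgap : j / (2 * m) - (m / (2 * m)) ^ 2 - 1/2 * (s / (2 * m)) <= 0) by lra.
    rewrite normalized_gap by exact Hm_pos.
    pose proof (covariance_upper beta m Hm t j s Hj Hs). nra.
  - intros eps Heps.
    destruct (covariance_lower beta m Hm eps ltac:(lra) Heps) as [t0 Ht0].
    exists t0. intros t j s Ht Hj Hs.
    enough (Hgap : 0 <= j / (2 * m) - (m / (2 * m)) ^ 2 - (1/2 - eps) * (s / (2 * m))) by lra.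
    rewrite normalized_gap by exact Hm_pos.
    pose proof (Ht0 t j s Ht Hj Hs). nra.
Qed.
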